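(* Let $\mathfrak{g}=(V,[\,,])$ be a $2$-step nilpotent Lie algebra over $K$ and let $x\cdot y$ be a pre-Lie algebra structure on $\mathfrak{g}$. Then $x\circ y=\frac12(x\cdot y+y\cdot x)$ defines a CPA-structure on $\mathfrak{g}$ if and only if every left multiplication $L(x)$, $L(x)(y)=x\cdot y$, is a derivation of $\mathfrak{g}$. If in this situation (all $L(x)$ derivations) moreover $Z(\mathfrak{g})\subseteq[\mathfrak{g},\mathfrak{g}]$, then all $L(x)$ are nilpotent.
   Context: $K$ is a field of characteristic zero and $V$ a finite-dimensional $K$-vector space. A pre-Lie algebra structure on a Lie algebra $\mathfrak{g}=(V,[\,,])$ is a bilinear product $x\cdot y$ on $V$ with $x\cdot y-y\cdot x=[x,y]$ and $[x,y]\cdot z=x\cdot(y\cdot z)-y\cdot(x\cdot z)$ for all $x,y,z$. A commutative post-Lie algebra structure (CPA-structure) on a Lie algebra $(V,[\,,])$ is a bilinear product $x\circ y$ on $V$ with $x\circ y=y\circ x$, $[x,y]\circ z=x\circ(y\circ z)-y\circ(x\circ z)$, and $x\circ[y,z]=[x\circ y,z]+[y,x\circ z]$ for all $x,y,z$. A Lie algebra is called $2$-step nilpotent here if it is nilpotent of class at most $2$, i.e. all brackets $[[x,y],z]$ vanish. $Z(\mathfrak{g})$ denotes the center. *)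

From HB Require Import structures.
From mathcomp Require Import all_boot all_order all_algebra.
Set Implicit Arguments. Unset Strict Implicit. Unset Printing Implicit Defensive.
Import GRing.Theory.
Local Open Scope ring_scope.

Section Defs.
Variables (K : fieldType) (V : vectType K).

Definition bilinearP (m : V -> V -> V) : Prop :=
  (forall (a : K) x y z, m (a *: x + y) z = a *: m x z + m y z) /\
  (forall (a : K) x y z, m x (a *: y + z) = a *: m x y + m x z).

Definition is_Lie (br : V -> V -> V) : Prop :=
  [/\ bilinearP br, (forall x, br x x = 0) &
      (forall x y z, br x (br y z) + br y (br z x) + br z (br x y) = 0)].

Definition two_step_nilpotent (br : V -> V -> V) : Prop :=
  forall x y z, br (br x y) z = 0.

Definition is_preLie_on (br : V -> V -> V) (pr : V -> V -> V) : Prop :=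
  [/\ bilinearP pr,
      (forall x y, pr x y - pr y x = br x y) &
      (forall x y z, pr (br x y) z = pr x (pr y z) - pr y (pr x z))].

Definition is_CPA (br : V -> V -> V) (c : V -> V -> V) : Prop :=
  [/\ bilinearP c,
      (forall x y, c x y = c y x),
      (forall x y z, c (br x y) z = c x (c y z) - c y (c x z)) &
      (forall x y z, c x (br y z) = br (c x y) z + br y (c x z))].

Definition is_derivation (br : V -> V -> V) (D : V -> V) : Prop :=
  forall y z, D (br y z) = br (D y) z + br y (D z).

Definition in_center (br : V -> V -> V) (z : V) : Prop :=
  forall x, br z x = 0.

Definition in_derived (br : V -> V -> V) (z : V) : Prop :=
  exists s : seq (V * V), z = \sum_(p <- s) br p.1 p.2.

Definition nilpotent_map (f : V -> V) : Prop :=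
  exists n : nat, forall y, iter n f y = 0.

End Defs.

From HB Require Import structures.
From mathcomp Require Import all_boot all_order all_algebra.
From mathcomp Require Import ring.
Set Implicit Arguments.
Unset Strict Implicit.
Import GRing.Theory.
Local Open Scope ring_scope.

(* In a 2-step nilpotent Lie algebra all brackets [x, [y, z]] vanish, so with
   x o y = x.y - 1/2 [x, y] the derivation axiom of a CPA-structure says exactly
   that L(x) is a derivation, and the other axioms then follow.
   When every L(x) is a derivation, L(x) preserves the centre Z, and modulo Z
   the product x.y is commutative and associative.  If moreover Z lies in
   [g, g], central elements multiply to 0, and every e with e.e = e mod Z is
   central.  Fitting's lemma for L(x) provides m and such an e acting as the
   identity on L(x)^m(g) modulo Z; hence L(x)^m(g) lies in Z, which is spanned
   by brackets, and the Leibniz rule gives L(x)^(3m) = 0. *)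

Section LinearMap.
Variables (K : fieldType) (V : vectType K) (f : V -> V).
Hypothesis f_linear : forall (a : K) x y, f (a *: x + y) = a *: f x + f y.

Lemma linD x y : f (x + y) = f x + f y.
Proof. by rewrite -[x]scale1r f_linear !scale1r. Qed.

Lemma lin0 : f 0 = 0.
Proof. by apply: (addrI (f 0)); rewrite -linD !addr0. Qed.

Lemma linZ a x : f (a *: x) = a *: f x.
Proof. by rewrite -[a *: x]addr0 f_linear lin0 addr0. Qed.

Lemma linN x : f (- x) = - f x.
Proof. by rewrite -scaleN1r linZ scaleN1r. Qed.

Lemma linB x y : f (x - y) = f x - f y.
Proof. by rewrite linD linN. Qed.

Lemma lin_sum (I : Type) (s : seq I) (F : I -> V) :
  f (\sum_(i <- s) F i) = \sum_(i <- s) f (F i).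
Proof. by elim: s => [|i s IHs]; rewrite ?big_nil ?lin0 // !big_cons linD IHs. Qed.

Lemma iter_linear n (a : K) x y :
  iter n f (a *: x + y) = a *: iter n f x + iter n f y.
Proof. by elim: n => //= n ->; rewrite f_linear. Qed.

#[local] HB.instance Definition _ := GRing.isLinear.Build K V V *:%R f f_linear.

Let F : 'End(V) := linfun f.
Let im_iter k := iter k (fun W : {vspace V} => (F @: W)%VS) fullv.

Let mem_im_iter k w : reflect (exists y, w = iter k f y) (w \in im_iter k).
Proof.
elim: k w => [|k IHk] w /=; first by rewrite memvf; apply: ReflectT; exists w.
apply: (iffP memv_imgP) => [[u /IHk [y ->] ->]|[y ->]].
  by exists y; rewrite lfunE.
by exists (iter k f y); [apply/IHk; exists y | rewrite lfunE].
Qed.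

Let im_iterS k : (im_iter k.+1 <= im_iter k)%VS.
Proof. by elim: k => [|k IHk]; [apply: subvf | apply: limgS]. Qed.

Let dim_im_iter_strict k :
  (forall i, (i < k)%N -> im_iter i.+1 != im_iter i) ->
  (\dim (im_iter k) + k <= \dim {:V})%N.
Proof.
elim: k => [|k IHk] neq_im; first by rewrite addn0 dimvS ?subvf.
have lt_dim : (\dim (im_iter k.+1) < \dim (im_iter k))%N.
  by rewrite ltnNge; apply: contra (neq_im k (ltnSn k)) => ?; rewrite eqEdim im_iterS.
rewrite addnS; apply: leq_trans (IHk (fun i lt_ik => neq_im i (ltnW lt_ik))).
by rewrite ltn_add2r.
Qed.

(* The images of the powers of [f] form a decreasing chain of subspaces, which
   becomes stationary after at most [\dim V] steps. *)
Lemma iter_image_stable :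
  exists j, forall i y, exists v, iter j f y = iter (i + j) f v.
Proof.
set N := (\dim {:V}).+1.
have [/existsP [j /eqP im_eq]|] := boolP [exists j : 'I_N, im_iter j.+1 == im_iter j].
  have im_const i : im_iter (i + j) = im_iter j.
    by elim: i => [//|i IHi]; rewrite addSn -[LHS]/(F @: im_iter (i + j))%VS IHi.
  exists j => i y.
  have : iter j f y \in im_iter (i + j) by rewrite im_const; apply/mem_im_iter; exists y.
  by case/mem_im_iter => v ->; exists v.
move/existsPn => neq_im; have := @dim_im_iter_strict N (fun i lt_iN => neq_im (Ordinal lt_iN)).
by rewrite /N addnS ltnNge leq_addl.
Qed.

End LinearMap.

Section TwoStepPreLie.
Variables (K : fieldType) (V : vectType K) (br pr : V -> V -> V).
Hypothesis hLie : is_Lie br.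
Hypothesis h2 : two_step_nilpotent br.
Hypothesis hpre : is_preLie_on br pr.
Hypothesis two_neq0 : (2 : K) != 0.

Let br_linl z : forall (a : K) x y, br (a *: x + y) z = a *: br x z + br y z.
Proof. by case: hLie => [[]]. Qed.
Let br_linr x : forall (a : K) y z, br x (a *: y + z) = a *: br x y + br x z.
Proof. by case: hLie => [[]]. Qed.
Let pr_linl z : forall (a : K) x y, pr (a *: x + y) z = a *: pr x z + pr y z.
Proof. by case: hpre => [[]]. Qed.
Let pr_linr x : forall (a : K) y z, pr x (a *: y + z) = a *: pr x y + pr x z.
Proof. by case: hpre => [[]]. Qed.

Lemma br0l z : br 0 z = 0. Proof. exact: lin0 (br_linl z). Qed.
Lemma brDl x y z : br (x + y) z = br x z + br y z. Proof. exact: (linD (br_linl z) x y). Qed.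
Lemma brBl x y z : br (x - y) z = br x z - br y z. Proof. exact: (linB (br_linl z) x y). Qed.
Lemma brZl a x z : br (a *: x) z = a *: br x z. Proof. exact: (linZ (br_linl z) a x). Qed.
Lemma brDr x y z : br x (y + z) = br x y + br x z. Proof. exact: (linD (br_linr x) y z). Qed.
Lemma brBr x y z : br x (y - z) = br x y - br x z. Proof. exact: (linB (br_linr x) y z). Qed.
Lemma brZr a x z : br x (a *: z) = a *: br x z. Proof. exact: (linZ (br_linr x) a z). Qed.
Lemma pr0l z : pr 0 z = 0. Proof. exact: lin0 (pr_linl z). Qed.
Lemma prDl x y z : pr (x + y) z = pr x z + pr y z. Proof. exact: (linD (pr_linl z) x y). Qed.
Lemma prBl x y z : pr (x - y) z = pr x z - pr y z. Proof. exact: (linB (pr_linl z) x y). Qed.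
Lemma pr0r x : pr x 0 = 0. Proof. exact: lin0 (pr_linr x). Qed.
Lemma prDr x y z : pr x (y + z) = pr x y + pr x z. Proof. exact: (linD (pr_linr x) y z). Qed.
Lemma prBr x y z : pr x (y - z) = pr x y - pr x z. Proof. exact: (linB (pr_linr x) y z). Qed.
Lemma prZr a x z : pr x (a *: z) = a *: pr x z. Proof. exact: (linZ (pr_linr x) a z). Qed.

Lemma br_anticomm x y : br y x = - br x y.
Proof.
case: hLie => _ brxx _; apply/eqP; rewrite -addr_eq0 addrC.
by have := brxx (x + y); rewrite brDl !brDr !brxx add0r addr0 => ->.
Qed.

Lemma br_br_r x y z : br x (br y z) = 0.
Proof. by rewrite br_anticomm h2 oppr0. Qed.

Lemma prC x y : pr x y = pr y x + br x y.
Proof. by case: hpre => _ prC_br _; rewrite -prC_br addrC subrK. Qed.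

Lemma pr_brl x y z : pr (br x y) z = pr x (pr y z) - pr y (pr x z).
Proof. by case: hpre. Qed.

Lemma half_add (u : V) : 2^-1 *: u + 2^-1 *: u = u.
Proof. by rewrite -scalerDl [_ + _](_ : _ = 1) ?scale1r //; field. Qed.

Lemma cpa_prodE x y : 2^-1 *: (pr x y + pr y x) = pr x y - 2^-1 *: br x y.
Proof.
have -> : br x y = pr x y - pr y x by case: hpre.
by rewrite scalerBr opprB addrCA -{2}[pr x y]half_add addrK scalerDr addrC.
Qed.

Lemma cpa_derivation_iff x y z :
  pr x (br y z) - 2^-1 *: br x (br y z) =
    br (pr x y - 2^-1 *: br x y) z + br y (pr x z - 2^-1 *: br x z)
  <-> pr x (br y z) = br (pr x y) z + br y (pr x z).
Proof. by rewrite br_br_r brBl brZl h2 brBr brZr br_br_r !scaler0 !subr0. Qed.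

Lemma cpa_iff_derivations :
  is_CPA br (fun x y => 2^-1 *: (pr x y + pr y x)) <->
    forall x, is_derivation br (pr x).
Proof.
split=> [[_ _ _ cpa_der] x y z | der].
  by apply/cpa_derivation_iff; rewrite -!cpa_prodE; apply: cpa_der.
split=> [|x y|x y z|x y z] /=.
- split=> a x y z; rewrite !cpa_prodE.
    by rewrite pr_linl br_linl scalerDr scalerBr !scalerA mulrC opprD addrACA.
  by rewrite pr_linr br_linr scalerDr scalerBr !scalerA mulrC opprD addrACA.
- by rewrite addrC.
- have cpa_cpa u v w : pr u (pr v w - 2^-1 *: br v w) - 2^-1 *: br u (pr v w - 2^-1 *: br v w)
      = pr u (pr v w) - 2^-1 *: (br (pr u v) w + br v (pr u w) + br u (pr v w)).
    by rewrite prBr prZr brBr brZr br_br_r scaler0 subr0 der -addrA -opprD -scalerDr.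
  rewrite !cpa_prodE h2 scaler0 subr0 pr_brl !cpa_cpa.
  have -> : br (pr x y) z = br (pr y x) z by rewrite prC brDl h2 addr0.
  by rewrite [br (pr y x) z + br x _ + _]addrAC opprB addrA subrK.
- by rewrite !cpa_prodE; apply/cpa_derivation_iff; apply: der.
Qed.

Section LeftDerivations.
Hypothesis der : forall x, is_derivation br (pr x).

Local Notation central := (in_center br).

Lemma central0 : central 0.
Proof. by move=> y; rewrite br0l. Qed.

Lemma centralD u v : central u -> central v -> central (u + v).
Proof. by move=> cu cv y; rewrite brDl cu cv addr0. Qed.

Lemma central_br a b : central (br a b).
Proof. by move=> y; apply: h2. Qed.

Lemma br_central y w : central w -> br y w = 0.
Proof. by move=> cw; rewrite br_anticomm cw oppr0. Qed.

Lemma central_prr y w : central w -> central (pr y w).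
Proof. by move=> cw v; have := der y w v; rewrite cw pr0r cw addr0 => <-. Qed.

Lemma central_prl w y : central w -> central (pr w y).
Proof. by move=> cw; rewrite prC cw addr0; apply: central_prr. Qed.

Lemma pr_central_assoc a b w : central w -> pr a (pr b w) = pr (pr a b) w.
Proof.
move=> cw; have := pr_brl a w b; rewrite br_central // pr0l => /esym/eqP.
by rewrite subr_eq0 (prC b w) (prC (pr a b) w) !br_central // !addr0 => /eqP.
Qed.

Definition eqZ u v := central (u - v).

Lemma eqZ_refl u : eqZ u u.
Proof. by rewrite /eqZ subrr; apply: central0. Qed.

Lemma eqZ_sym u v : eqZ u v -> eqZ v u.
Proof. by move=> cuv y; rewrite -opprB -scaleN1r brZl cuv scaler0. Qed.

Lemma eqZ_trans u v w : eqZ u v -> eqZ v w -> eqZ u w.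
Proof. by move=> cuv cvw; rewrite /eqZ -[u](subrK v) -addrA; apply: centralD. Qed.

Lemma eqZ_central u w : eqZ u w -> central w -> central u.
Proof. by move=> cuw cw; rewrite -[u](subrK w); apply: centralD. Qed.

Lemma eqZ_br u v y : eqZ u v -> br u y = br v y.
Proof. by move=> cuv; apply/eqP; rewrite -subr_eq0 -brBl cuv. Qed.

Lemma eqZ_brr u v y : eqZ u v -> br y u = br y v.
Proof. by move=> uv; rewrite br_anticomm (eqZ_br _ uv) -br_anticomm. Qed.

Lemma eqZ_prr y u v : eqZ u v -> eqZ (pr y u) (pr y v).
Proof. by rewrite /eqZ -prBr; apply: central_prr. Qed.

Lemma eqZ_prC u a : eqZ (pr u a) (pr a u).
Proof. by rewrite /eqZ prC addrAC subrr add0r; apply: central_br. Qed.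

Lemma eqZ_prA x z a : eqZ (pr (pr x z) a) (pr x (pr z a)).
Proof.
apply: eqZ_trans (eqZ_prC _ _) _; apply: eqZ_trans (eqZ_prr x (eqZ_prC a z)).
by rewrite /eqZ -pr_brl; apply/central_prl/central_br.
Qed.

Lemma eqZ_iter x n u v : eqZ u v -> eqZ (iter n (pr x) u) (iter n (pr x) v).
Proof. by move=> uv; elim: n => //= n; apply: eqZ_prr. Qed.

Lemma eqZ_iter_prl x n y a :
  eqZ (pr (iter n (pr x) y) a) (iter n (pr x) (pr y a)).
Proof.
elim: n => [|n IHn] /=; first exact: eqZ_refl.
exact: eqZ_trans (eqZ_prA _ _ _) (eqZ_prr x IHn).
Qed.

Lemma eqZ_iter_pr_swap x n u a :
  eqZ (pr (iter n (pr x) u) a) (pr u (iter n (pr x) a)).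
Proof.
apply: eqZ_trans (eqZ_iter_prl x n u a) _.
apply: eqZ_trans (eqZ_iter x n (eqZ_prC u a)) _.
exact: eqZ_trans (eqZ_sym (eqZ_iter_prl x n a u)) (eqZ_prC _ _).
Qed.

Lemma br_pr_pr x a b : br (pr x a) (pr x b) = 0.
Proof.
have := pr_central_assoc x x (central_br a b).
rewrite !der prDr !der (eqZ_br b (eqZ_prA x x a)) (eqZ_brr a (eqZ_prA x x b)).
set T := br (pr x a) (pr x b); rewrite [T + _]addrC addrACA -[X in _ = X -> _]addr0 => /addrI TT.
by rewrite -(half_add T) -scalerDr TT scaler0.
Qed.

Lemma iter_pr_br x n i j a b : (i + j <= n)%N ->
  central (iter i (pr x) a) -> central (iter j (pr x) b) ->
  iter n (pr x) (br a b) = 0.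
Proof.
have iter0 k : iter k (pr x) 0 = 0 := lin0 (iter_linear (pr_linr x) k).
have pr_br_l u v : central u -> pr x (br u v) = 0.
  by move=> cu; rewrite der cu addr0; apply: central_prr.
have pr_br_r u v : central v -> pr x (br u v) = 0.
  by move=> cv; rewrite der !br_central ?addr0 //; apply: central_prr.
elim: n i j a b => [|n IHn] [|i] [|j] a b // ij_n ca cb; rewrite ?iterSr.
- exact: ca.
- by rewrite pr_br_l ?iter0.
- by rewrite pr_br_l ?iter0.
- by rewrite pr_br_r ?iter0.
rewrite der (linD (iter_linear (pr_linr x) n)) (IHn i j.+1) ?(IHn i.+1 j) ?addr0 -?iterSr //.
all: by move: ij_n; rewrite ?addnS ?addSn ltnS.
Qed.

Section CenterInDerived.
Hypothesis center_sub_derived : forall z, central z -> in_derived br z.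

Lemma pr_central_central w w' : central w -> central w' -> pr w w' = 0.
Proof.
move=> cw /center_sub_derived [s ->]; rewrite (lin_sum (pr_linr w)) big1 // => p _.
by rewrite der (central_prl p.1 cw) br_central ?addr0 //; apply: central_prl.
Qed.

(* [T := br e f] is central and fixed by [pr e]; applying [pr e] to the
   pre-Lie identity for [pr T e] shows that it is also killed by [pr e]. *)
Lemma br_eq0_of_idem_modZ e f :
  eqZ (pr e e) e -> central (pr e f) -> br e f = 0.
Proof.
move=> ee_e cef; have [z cz ee] : exists2 z, central z & pr e e = e + z.
  by exists (pr e e - e); rewrite // addrC subrK.
have cfe : central (pr f e) by rewrite prC; apply: centralD (central_br _ _).
have eT : pr e (br e f) = br e f by rewrite der ee brDl cz (br_central _ cef) !addr0.
have := pr_brl e f e; rewrite (prC (br e f) e) h2 addr0 eT ee prDr => T_eq.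
rewrite -eT T_eq prBr prDr (pr_central_assoc e e cfe) (pr_central_assoc e f cz) ee prDl.
by rewrite (pr_central_central cz cfe) (pr_central_central cef cz) !addr0 subrr.
Qed.

Lemma central_of_idem_modZ e : eqZ (pr e e) e -> central e.
Proof.
move=> ee_e y; rewrite -(subrK (pr e y) y) brDr -(eqZ_br (pr e y) ee_e) br_pr_pr addr0.
apply: br_eq0_of_idem_modZ => //; rewrite prBr; apply: eqZ_sym.
apply: eqZ_trans (eqZ_sym (eqZ_prA e e y)) _.
by rewrite /eqZ -prBl; apply: central_prl.
Qed.

Lemma pr_nilpotent x : nilpotent_map (pr x).
Proof.
have [j stable] := iter_image_stable (pr_linr x).
have [v jx_v] := stable j.+2 x.
set m := j.+1; set e := iter m (pr x) v.
(* With L := pr x, modulo Z: e.L^m a = v.L^(2m) a = (L^(2m) v).a = (L^j x).a = L^m a. *)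
have e_unit a : eqZ (pr e (iter m (pr x) a)) (iter m (pr x) a).
  apply: eqZ_trans (eqZ_iter_pr_swap x m v _) _.
  rewrite -iterD; apply: eqZ_trans (eqZ_sym (eqZ_iter_pr_swap x (m + m) v a)) _.
  have -> : (m + m = j.+2 + j)%N by rewrite /m !addSn addnS.
  by rewrite -jx_v /m iterSr; apply: eqZ_iter_prl.
have im_central a : central (iter m (pr x) a).
  apply: eqZ_central (eqZ_sym (e_unit a)) _.
  exact/central_prl/central_of_idem_modZ/e_unit.
exists (m + m + m) => y; rewrite iterD.
have [s ->] := center_sub_derived (im_central y).
rewrite (lin_sum (iter_linear (pr_linr x) (m + m))) big1 // => p _.
exact: iter_pr_br (im_central _) (im_central _).
Qed.

End CenterInDerived.
End LeftDerivations.
End TwoStepPreLie.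

Theorem mainTheorem6 (K : fieldType) (V : vectType K)
  (hchar : [pchar K] =i pred0)
  (br : V -> V -> V) (pr : V -> V -> V)
  (hLie : is_Lie br) (h2 : two_step_nilpotent br)
  (hpre : is_preLie_on br pr) :
  (is_CPA br (fun x y => 2^-1 *: (pr x y + pr y x)) <->
     (forall x, is_derivation br (pr x))) /\
  ((forall x, is_derivation br (pr x)) ->
     (forall z, in_center br z -> in_derived br z) ->
     forall x, nilpotent_map (pr x)).
Proof.
have two_neq0 : (2 : K) != 0.
  by apply/negP => /(natf0_pchar (isT : (0 < 2)%N)) [p]; rewrite hchar.
split; first exact: cpa_iff_derivations hLie h2 hpre two_neq0.
by move=> der center_sub_derived x; apply: (pr_nilpotent hLie h2 hpre two_neq0).
Qed.
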